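(* In the situation below, the image $\bar\chi\in B$ of $\chi$ under $A\to B$ equals $(\mathbf a_{B^*})^{-1}$, the inverse of the distinguished group-like element of $B^*$.
   Context: $\Bbbk$ a field of characteristic $\ne 2$, $\mathbb G$ an algebraic supergroup, $\mathbb N$ a finite normal super-subgroup, $A=\mathcal O(\mathbb G)$, $B=\mathcal O(\mathbb N)$ with quotient map $a\mapsto\bar a$. Normality gives a left $A$-coaction on $B$, $\bar a\mapsto\sum(-1)^{|a_{(2)}||a_{(3)}|}a_{(1)}S_A(a_{(3)})\otimes\bar a_{(2)}$, hence a dual right $A$-supercomodule structure on $B^*$. Fix a nonzero homogeneous left integral $\phi$ in $B^*$ ($h\phi=\varepsilon(h)\phi$ for all $h\in B^*$; unique up to scalar). There is a unique group-like $\chi\in A$ with $\phi\mapsto\phi\otimes\chi$ under the coaction. The distinguished group-like element $\mathbf a_{B^*}\in B\cong B^{**}$ is the unique group-like element with $\phi*f=\langle f,\mathbf a_{B^*}\rangle\phi$ for all $f\in B^*$. *)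

(* Hopf superalgebras encoded concretely (no tensor product
   library is available): a tensor in A (x) A is represented by a finite list
   of pure tensors, and two such lists are identified when they agree under
   all pairs of linear functionals (A (x) B -> (A^* (x) B^* )^* is injective
   over a field, so this is exactly equality in A (x) A). *)
From HB Require Import structures.
From mathcomp Require Import all_boot all_order all_algebra all_field.
Set Implicit Arguments. Unset Strict Implicit. Unset Printing Implicit Defensive.
Import GRing.Theory.
Local Open Scope ring_scope.

Section SuperHopf.
Variable K : fieldType.

Definition lin_fun (V : lmodType K) (f : V -> K) : Prop :=
  forall (c : K) (x y : V), f (c *: x + y) = c * f x + f y.

Variable A : algType K.

Definition teq (s t : seq (A * A)) : Prop :=
  forall f g : A -> K, lin_fun f -> lin_fun g ->
    \sum_(p <- s) f p.1 * g p.2 = \sum_(p <- t) f p.1 * g p.2.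

Definition teq3 (s t : seq (A * A * A)) : Prop :=
  forall f g h : A -> K, lin_fun f -> lin_fun g -> lin_fun h ->
    \sum_(p <- s) f p.1.1 * g p.1.2 * h p.2 =
    \sum_(p <- t) f p.1.1 * g p.1.2 * h p.2.

(* A Z/2-graded (super) Hopf algebra structure on A, given by the projection
   par0 onto the even part (the odd part of x is x - par0 x), the coproduct,
   the counit and the antipode. *)
Record superHopf := SuperHopf {
  par0 : A -> A;
  cop : A -> seq (A * A);
  cou : A -> K;
  anti : A -> A;
  (* grading: A = A_0 (+) A_1 with A_i A_j <= A_{i+j} *)
  par0_lin : forall (c : K) x y, par0 (c *: x + y) = c *: par0 x + par0 y;
  par0_idem : forall x, par0 (par0 x) = par0 x;
  par0_1 : par0 1 = 1;
  par0_ee : forall x y, par0 (par0 x * par0 y) = par0 x * par0 y;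
  par0_oo : forall x y, par0 ((x - par0 x) * (y - par0 y)) = (x - par0 x) * (y - par0 y);
  par0_eo : forall x y, par0 (par0 x * (y - par0 y)) = 0;
  par0_oe : forall x y, par0 ((x - par0 x) * par0 y) = 0;
  cop_lin : forall (c : K) x y,
    teq (cop (c *: x + y)) ([seq (c *: p.1, p.2) | p <- cop x] ++ cop y);
  cop_even : forall x, teq (cop (par0 x))
    ([seq (par0 p.1, par0 p.2) | p <- cop x] ++
     [seq (p.1 - par0 p.1, p.2 - par0 p.2) | p <- cop x]);
  cop_coassoc : forall x,
    teq3 (flatten [seq [seq (u.1, u.2, p.2) | u <- cop p.1] | p <- cop x])
         (flatten [seq [seq (p.1, v.1, v.2) | v <- cop p.2] | p <- cop x]);
  cop_1 : teq (cop 1) [:: (1, 1)];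
  (* (x (x) y)(u (x) v) = (-1)^{|y||u|} xu (x) yv *)
  cop_mul : forall x y, teq (cop (x * y))
    (flatten [seq [:: (p.1 * r.1, par0 p.2 * r.2);
                      (p.1 * par0 r.1, (p.2 - par0 p.2) * r.2);
                      (- (p.1 * (r.1 - par0 r.1)), (p.2 - par0 p.2) * r.2)]
             | p <- cop x, r <- cop y]);
  cou_lin : lin_fun cou;
  cou_even : forall x, cou (x - par0 x) = 0;
  cou_1 : cou 1 = 1;
  cou_mul : forall x y, cou (x * y) = cou x * cou y;
  cou_l : forall x, \sum_(p <- cop x) cou p.1 *: p.2 = x;
  cou_r : forall x, \sum_(p <- cop x) cou p.2 *: p.1 = x;
  anti_lin : forall (c : K) x y, anti (c *: x + y) = c *: anti x + anti y;
  anti_even : forall x, anti (par0 x) = par0 (anti x);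
  anti_l : forall x, \sum_(p <- cop x) anti p.1 * p.2 = cou x *: 1;
  anti_r : forall x, \sum_(p <- cop x) p.1 * anti p.2 = cou x *: 1
}.

Definition par1 (H : superHopf) (x : A) : A := x - par0 H x.

Definition supercomm (H : superHopf) : Prop :=
  (forall x y, par0 H x * y = y * par0 H x) /\
  (forall x y, par1 H x * par1 H y = - (par1 H y * par1 H x)).

Definition fin_gen : Prop :=
  exists s : seq A, forall P : A -> Prop,
    P 1 -> (forall c x y, P x -> P y -> P (c *: x + y)) ->
    (forall x y, P x -> P y -> P (x * y)) ->
    (forall x, x \in s -> P x) -> forall a, P a.

Definition grouplike (H : superHopf) (g : A) : Prop :=
  teq (cop H g) [:: (g, g)] /\ cou H g = 1.

End SuperHopf.

Definition alg_supergroup (K : fieldType) (A : algType K) (H : superHopf A) :=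
  supercomm H /\ fin_gen A.

Section Maps.
Variables (K : fieldType) (A B : algType K) (HA : superHopf A) (HB : superHopf B).

Definition hopf_quot (q : A -> B) : Prop :=
  [/\ (forall (c : K) x y, q (c *: x + y) = c *: q x + q y),
      q 1 = 1 & (forall x y, q (x * y) = q x * q y)] /\
  [/\ (forall x, q (par0 HA x) = par0 HB (q x)),
      (forall x, teq (cop HB (q x)) [seq (q p.1, q p.2) | p <- cop HA x]),
      (forall x, cou HB (q x) = cou HA x)
    & (forall b, exists a, q a = b)].

(* (id (x) f)(ad(a)) where ad(a) = sum (-1)^{|a2||a3|} a1 S(a3) (x) q(a2)
   is the adjoint coaction A -> A (x) B, evaluated against f in B^*. *)
Definition adj (q : A -> B) (f : B -> K) (a : A) : A :=
  \sum_(t <- flatten [seq [seq (u.1, u.2, p.2) | u <- cop HA p.1] | p <- cop HA a])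
    (f (q t.1.2) *: (t.1.1 * anti HA t.2)
     - 2%:R * f (q (par1 HA t.1.2)) *: (t.1.1 * anti HA (par1 HA t.2))).

(* normality of N: the adjoint coaction maps ker q into A (x) ker q,
   i.e. (id (x) q) o ad vanishes on ker q *)
Definition normal_quot (q : A -> B) : Prop :=
  forall a, q a = 0 -> forall f : B -> K, lin_fun f -> adj q f a = 0.

Definition conv (f g : B -> K) (b : B) : K :=
  \sum_(p <- cop HB b) f p.1 * g p.2.

Definition left_integral (phi : B -> K) : Prop :=
  [/\ lin_fun phi, (exists b, phi b != 0),
      (forall b, phi (par1 HB b) = 0) \/ (forall b, phi (par0 HB b) = 0)
    & forall h : B -> K, lin_fun h -> forall b, conv h phi b = h 1 * phi b].

(* the dual right coaction sends phi to phi (x) chi *)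
Definition coacts_by (q : A -> B) (phi : B -> K) (chi : A) : Prop :=
  forall a, phi (q a) *: chi = adj q phi a.

(* distinguished group-like element of B^* (an element of B, identified with the double dual of B) *)
Definition distinguished (phi : B -> K) (g : B) : Prop :=
  grouplike HB g /\
  forall f : B -> K, lin_fun f -> forall b, conv phi f b = f g * phi b.

End Maps.

From HB Require Import structures.
From mathcomp Require Import all_boot all_order all_algebra all_field.
Set Implicit Arguments. Unset Strict Implicit. Unset Printing Implicit Defensive.
Import GRing.Theory.
Local Open Scope ring_scope.

(* Choose a with phi (q a) <> 0 and apply q to the coaction identity
   phi (q a) chi = ad(a).  Since q is a surjective map of Hopf superalgebras
   and B is finite dimensional, q (ad a) can be computed inside B: the
   left-integral identity sum phi(b2) b1 = phi(b) 1 collapses the middle leg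
   of the double coproduct, the identity sum phi(b1) b2 = phi(b) a_B* defining
   the distinguished element collapses the first one, and what is left is
   phi (q a) S(a_B* ).  The super sign in ad does not contribute: it vanishes
   when phi is even, and a_B* is even when phi is odd.  Hence
   q chi = S(a_B* ) = a_B*^-1. *)

Lemma par1_lin (K : fieldType) (A : algType K) (H : superHopf A) : linear (par1 H).
Proof. by move=> c x y; rewrite /par1 par0_lin scalerBr opprD addrACA. Qed.

HB.instance Definition _ (K : fieldType) (A : algType K) (H : superHopf A) :=
  GRing.isLinear.Build K A A _ (par0 H) (@par0_lin _ _ H).
HB.instance Definition _ (K : fieldType) (A : algType K) (H : superHopf A) :=
  GRing.isLinear.Build K A A _ (par1 H) (par1_lin H).
HB.instance Definition _ (K : fieldType) (A : algType K) (H : superHopf A) :=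
  GRing.isLinear.Build K A A _ (anti H) (@anti_lin _ _ H).

Definition twist (K : fieldType) (A : algType K) (H : superHopf A) (k : K) (x : A) :=
  x - k *: par1 H x.

Lemma twist_lin (K : fieldType) (A : algType K) (H : superHopf A) k :
  linear (twist H k).
Proof.
move=> c x y; rewrite /twist (par1_lin H c x y) scalerDr [in RHS]scalerBr.
by rewrite !scalerA mulrC opprD addrACA.
Qed.

HB.instance Definition _ (K : fieldType) (A : algType K) (H : superHopf A) k :=
  GRing.isLinear.Build K A A _ (twist H k) (twist_lin H k).

Lemma par1_par0 (K : fieldType) (A : algType K) (H : superHopf A) x :
  par1 H (par0 H x) = 0.
Proof. by rewrite /par1 par0_idem subrr. Qed.

Lemma par1_idem (K : fieldType) (A : algType K) (H : superHopf A) x :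
  par1 H (par1 H x) = par1 H x.
Proof. by rewrite {2}/par1 linearB /= par1_par0 subr0. Qed.

Section FiniteDimensional.
Variables (K : fieldType) (B : falgType K).
Local Notation e := (vbasis (fullv : {vspace B})).

Lemma coord_lin_fun i : lin_fun (coord e i).
Proof. by move=> c x y; rewrite linearP. Qed.

Lemma eq_coord x y : (forall i, coord e i x = coord e i y) -> x = y.
Proof.
move=> Exy; rewrite (coord_vbasis (memvf x)) (coord_vbasis (memvf y)).
by apply: eq_bigr => i _; rewrite Exy.
Qed.

Section LinearExpansion.
Variables (V : lmodType K) (G : B -> V).
Hypothesis G_lin : linear G.
HB.instance Definition _ := GRing.isLinear.Build K B V _ G G_lin.

Lemma linear_coord_expand x : G x = \sum_i coord e i x *: G e`_i.
Proof.
rewrite {1}(coord_vbasis (memvf x)) linear_sum.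
by apply: eq_bigr => i _; rewrite linearZ.
Qed.
End LinearExpansion.

(* Finite dimensionality is what turns [teq], which only tests pairs of
   functionals, into an identity for arbitrary bilinear maps. *)
Lemma teq_bilinear (V : lmodType K) (F : B -> B -> V) s t :
  (forall y, linear (F^~ y)) -> (forall x, linear (F x)) -> teq s t ->
  \sum_(p <- s) F p.1 p.2 = \sum_(p <- t) F p.1 p.2.
Proof.
move=> Fl Fr st.
have expandF u : \sum_(p <- u) F p.1 p.2 = \sum_i \sum_j
    (\sum_(p <- u) coord e i p.1 * coord e j p.2) *: F e`_i e`_j.
  under eq_bigr => p _.
    rewrite (linear_coord_expand (Fl _)).
    under eq_bigr do rewrite (linear_coord_expand (Fr _)) scaler_sumr.
    over.
  rewrite exchange_big; apply: eq_bigr => i _.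
  rewrite exchange_big; apply: eq_bigr => j _.
  by rewrite scaler_suml; apply: eq_bigr => p _; rewrite scalerA.
rewrite !expandF; apply: eq_bigr => i _; apply: eq_bigr => j _.
by rewrite (st _ _ (@coord_lin_fun i) (@coord_lin_fun j)).
Qed.

Lemma mul3_coord_expand (x y z : B) : x * y * z = \sum_i \sum_j \sum_k
  (coord e i x * coord e j y * coord e k z) *: (e`_i * e`_j * e`_k).
Proof.
rewrite [in LHS](coord_vbasis (memvf x)) [in LHS](coord_vbasis (memvf y)).
rewrite [in LHS](coord_vbasis (memvf z)) !mulr_suml; apply: eq_bigr => i _.
rewrite [_ *: _ * _]mulr_sumr mulr_suml; apply: eq_bigr => j _.
rewrite mulr_sumr; apply: eq_bigr => k _.
by rewrite -!scalerAr -!scalerAl !scalerA mulrC (mulrC (coord _ j y)).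
Qed.

Lemma teq3_mul (A : algType K) (f1 f2 f3 : {linear A -> B}) s t : teq3 s t ->
  \sum_(p <- s) f1 p.1.1 * f2 p.1.2 * f3 p.2 =
  \sum_(p <- t) f1 p.1.1 * f2 p.1.2 * f3 p.2.
Proof.
move=> st.
have expandF u : \sum_(p <- u) f1 p.1.1 * f2 p.1.2 * f3 p.2 =
    \sum_i \sum_j \sum_k (\sum_(p <- u) coord e i (f1 p.1.1) *
      coord e j (f2 p.1.2) * coord e k (f3 p.2)) *: (e`_i * e`_j * e`_k).
  under eq_bigr do rewrite mul3_coord_expand.
  rewrite exchange_big; apply: eq_bigr => i _.
  rewrite exchange_big; apply: eq_bigr => j _.
  rewrite exchange_big; apply: eq_bigr => k _.
  by rewrite scaler_suml.
have coord_comp (f : {linear A -> B}) i : lin_fun (fun x => coord e i (f x)).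
  by move=> c x y; rewrite !linearP.
rewrite !expandF; apply: eq_bigr => i _; apply: eq_bigr => j _.
by apply: eq_bigr => k _; rewrite (st _ _ _ (coord_comp f1 i) (coord_comp f2 j)
  (coord_comp f3 k)).
Qed.

End FiniteDimensional.

Section Integrals.
Variables (K : fieldType) (B : falgType K) (HB : superHopf B).
Variables (phi : B -> K) (aB : B).
Hypothesis phi_lin : lin_fun phi.
HB.instance Definition _ := GRing.isLinear.Build K B K^o *%R phi phi_lin.

Lemma left_integral_sum :
  (forall h : B -> K, lin_fun h -> forall b, conv HB h phi b = h 1 * phi b) ->
  forall b, \sum_(p <- cop HB b) phi p.2 *: p.1 = phi b *: 1.
Proof.
move=> phi_int b; apply: eq_coord => i.
rewrite linear_sum linearZ /= mulrC -phi_int; last exact: coord_lin_fun.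
by apply: eq_bigr => p _; rewrite linearZ /= mulrC.
Qed.

Lemma distinguished_sum :
  (forall f : B -> K, lin_fun f -> forall b, conv HB phi f b = f aB * phi b) ->
  forall b, \sum_(p <- cop HB b) phi p.1 *: p.2 = phi b *: aB.
Proof.
move=> phi_aB b; apply: eq_coord => i.
rewrite linear_sum linearZ /= mulrC -phi_aB; last exact: coord_lin_fun.
by apply: eq_bigr => p _; rewrite linearZ.
Qed.

Lemma odd_lin_fun_par1 :
  (forall b, phi (par0 HB b) = 0) -> forall b, phi (par1 HB b) = phi b.
Proof. by move=> phi_odd b; rewrite linearB /= phi_odd subr0. Qed.

(* Project the identity of [distinguished_sum] to the odd part and compare
   its values at b0 and at the even part of b0. *)
Lemma distinguished_par1_eq0 b0 : phi b0 != 0 ->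
  (forall b, phi (par0 HB b) = 0) ->
  (forall b, \sum_(p <- cop HB b) phi p.1 *: p.2 = phi b *: aB) ->
  par1 HB aB = 0.
Proof.
move=> phi_b0 phi_odd phi_aB.
pose F x y := phi x *: par1 HB y.
pose D b := \sum_(p <- cop HB b) F p.1 p.2.
have DE b : D b = phi b *: par1 HB aB.
  by rewrite -linearZ -phi_aB linear_sum; apply: eq_bigr => p _; rewrite /= linearZ.
have D_even : D (par0 HB b0) = D b0.
  have Fl y : linear (F^~ y) by move=> c u v; rewrite /F linearP scalerDl scalerA.
  have Fr x : linear (F x).
    by move=> c u v; rewrite /F linearP /= scalerDr !scalerA mulrC.
  rewrite /D (teq_bilinear Fl Fr (cop_even HB b0)) big_cat !big_map /=.
  rewrite big1 ?add0r => [|p _]; last by rewrite /F par1_par0 scaler0.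
  by apply: eq_bigr => p _; rewrite /F par1_idem [phi _]linearB /= phi_odd subr0.
have : phi b0 *: par1 HB aB = 0 by rewrite -DE -D_even DE phi_odd scale0r.
by move/eqP; rewrite scaler_eq0 (negbTE phi_b0) => /eqP.
Qed.

End Integrals.

Lemma grouplike_anti (K : fieldType) (B : falgType K) (HB : superHopf B) g :
  grouplike HB g -> anti HB g = g^-1.
Proof.
move=> [g_cop g_cou].
have cop_g (F : B -> B -> B) : (forall y, linear (F^~ y)) -> (forall x, linear (F x)) ->
    \sum_(p <- cop HB g) F p.1 p.2 = F g g.
  by move=> Fl Fr; rewrite (teq_bilinear Fl Fr g_cop) big_seq1.
have anti_gg : anti HB g * g = 1.
  rewrite -(cop_g (fun x y => anti HB x * y)) ?anti_l ?g_cou ?scale1r //.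
    by move=> y c u v; rewrite linearP /= mulrDl scalerAl.
  by move=> x c u v; rewrite mulrDr scalerAr.
have g_anti : g * anti HB g = 1.
  rewrite -(cop_g (fun x y => x * anti HB y)) ?anti_r ?g_cou ?scale1r //.
    by move=> y c u v; rewrite mulrDl scalerAl.
  by move=> x c u v; rewrite linearP /= mulrDr scalerAr.
have g_unit : g \is a GRing.unit by apply/unitrP; exists (anti HB g).
by rewrite -[LHS]mulr1 -(mulrV g_unit) mulrA anti_gg mul1r.
Qed.

Section HopfMap.
Variables (K : fieldType) (A : algType K) (B : falgType K).
Variables (HA : superHopf A) (HB : superHopf B) (q : A -> B).
Hypotheses (q_lin : linear q) (q1 : q 1 = 1) (qM : {morph q : x y / x * y}).
Hypothesis q_cop : forall x, teq (cop HB (q x)) [seq (q p.1, q p.2) | p <- cop HA x].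
Hypothesis q_cou : forall x, cou HB (q x) = cou HA x.
Hypothesis q_par0 : forall x, q (par0 HA x) = par0 HB (q x).
HB.instance Definition _ := GRing.isLinear.Build K A B _ q q_lin.

Lemma sum_cop_hopf_map (V : lmodType K) (F : B -> B -> V) x :
  (forall y, linear (F^~ y)) -> (forall x, linear (F x)) ->
  \sum_(p <- cop HA x) F (q p.1) (q p.2) = \sum_(p <- cop HB (q x)) F p.1 p.2.
Proof. by move=> Fl Fr; rewrite (teq_bilinear Fl Fr (q_cop x)) big_map. Qed.

(* Both sides are convolution inverses of q in Hom(A, B); coassociativity
   makes that convolution associative. *)
Lemma hopf_map_anti a : q (anti HA a) = anti HB (q a).
Proof.
have anti_q_l x : \sum_(u <- cop HA x) anti HB (q u.1) * q u.2 = cou HA x *: 1.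
  rewrite (@sum_cop_hopf_map _ (fun y z => anti HB y * z)) ?anti_l ?q_cou //.
    by move=> z c u v; rewrite linearP /= mulrDl scalerAl.
  by move=> y c u v; rewrite mulrDr scalerAr.
have q_anti_r x : \sum_(u <- cop HA x) q u.1 * q (anti HA u.2) = cou HA x *: 1.
  under eq_bigr do rewrite -qM.
  by rewrite -linear_sum anti_r linearZ /= q1.
have := teq3_mul (anti HB \o q) q (q \o anti HA) (cop_coassoc HA a).
rewrite !big_flatten !big_map /=.
under eq_bigr => j _ do rewrite big_map /= -mulr_suml anti_q_l -scalerAl mul1r.
under [X in _ = X -> _]eq_bigr => j _.
  rewrite big_map /=; under eq_bigr do rewrite -mulrA.
  by rewrite -mulr_sumr q_anti_r -scalerAr mulr1; over.
move=> coassoc.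
rewrite -[in LHS](cou_l HA a) -[in RHS](cou_r HA a) !linear_sum /=.
under eq_bigr do rewrite !linearZ; under [in RHS]eq_bigr do rewrite !linearZ.
exact: coassoc.
Qed.

Lemma hopf_map_par1 x : q (par1 HA x) = par1 HB (q x).
Proof. by rewrite linearB /= q_par0. Qed.

Lemma hopf_map_anti_twist k x :
  q (anti HA (twist HA k x)) = anti HB (twist HB k (q x)).
Proof. by rewrite hopf_map_anti /twist linearB linearZ /= hopf_map_par1. Qed.

Variables (phi : B -> K) (aB : B).
Hypothesis phi_lin : lin_fun phi.
Hypothesis phi_left_integral :
  forall b, \sum_(p <- cop HB b) phi p.2 *: p.1 = phi b *: 1.
Hypothesis phi_aB : forall b, \sum_(p <- cop HB b) phi p.1 *: p.2 = phi b *: aB.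
HB.instance Definition _ := GRing.isLinear.Build K B K^o *%R phi phi_lin.

(* The super sign in [adj] is absorbed by [twist HA k]: k = 0 (the identity)
   when phi is even, k = 2 (the grading automorphism) when phi is odd. *)
Lemma hopf_map_adj k a :
  (forall b, 2%:R * phi (par1 HB b) = k * phi b) ->
  q (adj HA q phi a) = phi (q a) *: anti HB (twist HB k aB).
Proof.
move=> phi_par1.
transitivity (\sum_(p <- cop HA a) \sum_(u <- cop HA p.1)
    phi (q u.2) *: (q u.1 * q (anti HA (twist HA k p.2)))).
  rewrite linear_sum big_flatten big_map /=; apply: eq_bigr => p _.
  rewrite big_map; apply: eq_bigr => u _ /=.
  rewrite linearB !linearZ /= !qM !hopf_map_par1 phi_par1 hopf_map_anti_twist.
  rewrite !hopf_map_anti hopf_map_par1 /twist [in RHS]linearB [in RHS]linearZ /=.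
  by rewrite mulrBr -scalerAr scalerBr scalerA [phi _ * k]mulrC scalerN.
have scale_lin (c0 : K) : linear (fun x : B => c0 *: x).
  by move=> c u v; rewrite linearP.
have coef_lin (x : B) : linear (fun y : B => phi y *: x).
  by move=> c u v; rewrite linearP scalerDl scalerA.
transitivity (\sum_(p <- cop HA a) phi (q p.1) *: anti HB (twist HB k (q p.2))).
  apply: eq_bigr => p _; under eq_bigr do rewrite scalerAl.
  rewrite -mulr_suml (@sum_cop_hopf_map _ (fun x y => phi y *: x) _
    (fun y => scale_lin (phi y)) coef_lin).
  rewrite phi_left_integral.
  by rewrite -scalerAl mul1r hopf_map_anti_twist.
rewrite -2!linearZ /= -phi_aB.
rewrite -(@sum_cop_hopf_map _ (fun x y => phi x *: y) _ coef_lin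
  (fun x => scale_lin (phi x))).
rewrite !linear_sum.
by apply: eq_bigr => p _; rewrite !linearZ.
Qed.

Lemma coacts_by_hopf_map chi k a : coacts_by HA q phi chi -> phi (q a) != 0 ->
  (forall b, 2%:R * phi (par1 HB b) = k * phi b) ->
  q chi = anti HB (twist HB k aB).
Proof.
move=> chi_coact phi_qa phi_par1; apply: (scalerI phi_qa).
by rewrite -linearZ /= chi_coact (hopf_map_adj _ phi_par1).
Qed.

End HopfMap.

Theorem mainTheorem16 (K : fieldType) (A : algType K) (B : falgType K)
  (HA : superHopf A) (HB : superHopf B) (q : A -> B)
  (phi : B -> K) (chi : A) (aB : B) :
  (2%:R : K) != 0 ->
  alg_supergroup HA ->
  hopf_quot HA HB q ->
  normal_quot HA q ->
  left_integral HB phi ->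
  grouplike HA chi ->
  coacts_by HA q phi chi ->
  distinguished HB phi aB ->
  q chi = aB^-1.
Proof.
move=> _ _ [[q_lin q1 qM] [q_par0 q_cop q_cou q_onto]] _
  [phi_lin [b0 phi_b0] phi_parity phi_int] _ chi_coact [aB_grouplike aB_dist].
have phi_aB := distinguished_sum aB_dist.
have [k phi_par1 twist_aB] : exists2 k : K,
    forall b, 2%:R * phi (par1 HB b) = k * phi b & twist HB k aB = aB.
  case: phi_parity => [phi_even | phi_odd].
    exists 0 => [b|]; first by rewrite phi_even mulr0 mul0r.
    by rewrite /twist scale0r subr0.
  exists 2%:R => [b|]; first by rewrite odd_lin_fun_par1 // mulrC.
  by rewrite /twist (distinguished_par1_eq0 phi_lin phi_b0) // scaler0 subr0.
have [a qa] := q_onto b0.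
have phi_qa : phi (q a) != 0 by rewrite qa.
rewrite (coacts_by_hopf_map q_lin q1 qM q_cop q_cou q_par0 phi_lin
  (left_integral_sum phi_int) phi_aB chi_coact phi_qa phi_par1).
by rewrite twist_aB grouplike_anti.
Qed.
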